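(* In the binary setting below, define $\mathrm{CL}_{\mathrm{induced}}:=-\mathbb{E}[\mathrm{Var}(S-C\mid S_B)]$ and $\mathrm{GL}_{\mathrm{induced}}:=\mathbb{E}[\mathrm{Var}(C\mid S_B)]$. Then $$\mathrm{CL}_{\mathrm{induced}}+\mathrm{GL}_{\mathrm{induced}}=\mathbb{E}\big[2\,\mathrm{Cov}(S,C\mid S_B)-\mathrm{Var}(S\mid S_B)\big],$$ and $$-\mathbb{E}\Big[\sqrt{\mathrm{Var}(S\mid S_B)}\big(2\sqrt{\mathrm{Var}(C\mid S_B)}+\sqrt{\mathrm{Var}(S\mid S_B)}\big)\Big]\le \mathrm{CL}_{\mathrm{induced}}+\mathrm{GL}_{\mathrm{induced}}\le \mathbb{E}\Big[\sqrt{\mathrm{Var}(S\mid S_B)}\big(2\sqrt{\mathrm{Var}(C\mid S_B)}-\sqrt{\mathrm{Var}(S\mid S_B)}\big)\Big].$$ If moreover $[0,1]$ is divided into $N$ equal-width bins, then $$-\tfrac1N\mathbb{E}\big[\sqrt{C_B(1-C_B)}\big]-\tfrac{1}{4N^2}\le \mathrm{CL}_{\mathrm{induced}}+\mathrm{GL}_{\mathrm{induced}}\le \tfrac1N\mathbb{E}\big[\sqrt{C_B(1-C_B)}\big].$$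
   Context: Binary setting: $(X,Y)$ jointly distributed with $Y\in\{0,1\}$; $Q:=P(Y=1\mid X)$; $S=f(X)\in[0,1]$ is a classifier's confidence score for the positive class; $C:=\mathbb{E}[Q\mid S]$. Given a partition of $[0,1]$ into bins $\mathcal{B}_1,\dots,\mathcal{B}_J$ (intervals), the binned score $S_B$ equals $\mathbb{E}[S\mid S\in\mathcal{B}_j]$ on $\{S\in\mathcal{B}_j\}$, and $C_B:=\mathbb{E}[Q\mid S_B]=\mathbb{E}[C\mid S_B]$. $\mathrm{Var}(\cdot\mid S_B)$ and $\mathrm{Cov}(\cdot,\cdot\mid S_B)$ denote ordinary conditional variance and covariance. ''$N$ equal-width bins'' means the bins are the intervals of length $1/N$ partitioning $[0,1]$. *)

From HB Require Import structures.
From mathcomp Require Import all_boot all_order all_algebra.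
From mathcomp Require Import all_classical all_reals all_analysis.
Set Implicit Arguments. Unset Strict Implicit. Unset Printing Implicit Defensive.
Import Order.TTheory GRing.Theory Num.Theory.
Import numFieldNormedType.Exports.
Local Open Scope classical_set_scope.
Local Open Scope ring_scope.

(* Elementary conditional expectation of X given an event A:
   E[X 1_A] / P(A)  (equal to 0 if P(A) = 0, which is irrelevant a.s.). *)
Definition condE_ev d (T : measurableType d) (R : realType)
  (P : probability T R) (A : set T) (X : T -> R) : R :=
  fine ('E_P[(fun t => X t * \1_A t)%R])%E / fine (P A).

(* Conditional expectation given a discrete (finitely-valued) real random
   variable Z, as a random variable: on {Z = z} it equals E[X | Z = z]. *)
Definition condE_given d (T : measurableType d) (R : realType)
  (P : probability T R) (Z : T -> R) (X : T -> R) : T -> R :=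
  fun t => condE_ev P (Z @^-1` [set Z t]) X.

Definition condVar_given d (T : measurableType d) (R : realType)
  (P : probability T R) (Z : T -> R) (X : T -> R) : T -> R :=
  condE_given P Z (fun u => (X u - condE_given P Z X u) ^+ 2).

Definition condCov_given d (T : measurableType d) (R : realType)
  (P : probability T R) (Z : T -> R) (X W : T -> R) : T -> R :=
  condE_given P Z (fun u => (X u - condE_given P Z X u)
                            * (W u - condE_given P Z W u)).

Definition is_cond_exp d (T : measurableType d) (R : realType)
  (P : probability T R) d' (T' : measurableType d')
  (Z : T -> T') (X W : T -> R) : Prop :=
  [/\ exists g : T' -> R, measurable_fun [set: T'] g /\ W = g \o Z,
      P.-integrable [set: T] (EFin \o W) &
      forall A : set T', measurable A ->
        ('E_P[(fun t => X t * \1_(Z @^-1` A) t)%R]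
         = 'E_P[(fun t => W t * \1_(Z @^-1` A) t)%R])%E].

Definition interval_partition01 (R : realType) (J : nat)
  (B : 'I_J -> set R) : Prop :=
  [/\ forall j, is_interval (B j),
      forall j k, j != k -> B j `&` B k = set0 &
      \bigcup_(j in [set: 'I_J]) B j = `[0, 1]%classic].

Definition equal_width_bins (R : realType) (J : nat)
  (B : 'I_J -> set R) : Prop :=
  forall j : 'I_J,
    `](j%:R / J%:R), ((j.+1)%:R / J%:R)[%classic `<=` B j /\
    B j `<=` `[(j%:R / J%:R), ((j.+1)%:R / J%:R)]%classic.

Definition binned_score d (T : measurableType d) (R : realType)
  (P : probability T R) (J : nat) (B : 'I_J -> set R) (S : T -> R) : T -> R :=
  fun t => \sum_(j < J) \1_(S @^-1` B j) t * condE_ev P (S @^-1` B j) S.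

From HB Require Import structures.
From mathcomp Require Import all_boot all_order all_algebra.
From mathcomp Require Import all_classical all_reals all_analysis.
From mathcomp Require Import measurable_realfun ring lra.
Import Order.TTheory GRing.Theory Num.Theory.
Set Implicit Arguments. Unset Strict Implicit. Unset Printing Implicit Defensive.
Import numFieldNormedType.Exports.
Local Open Scope classical_set_scope.
Local Open Scope ring_scope.

(* Conditioning on the binned score S_B is conditioning on the finitely many
   events {S_B = s}, so every conditional moment is an elementary quotient
   E[X 1_A] / P(A) over such an event A, and the theorem reduces to facts about
   a single event.  There Var(S - C) = Var S - 2 Cov(S, C) + Var C gives the
   identity, and Cauchy-Schwarz, |Cov(S, C)| <= sqrt(Var S) sqrt(Var C), gives
   the general bounds.  For N equal-width bins, {S_B = s} is a union of bins of
   width 1/N on each of which S_B is the mean of S, so Var(S | S_B) <= 1/(4N^2),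
   while Var(C | S_B) <= C_B (1 - C_B) because C takes values in [0, 1].
   The latter holds only almost surely for a version C of E[Q | S], so C is
   first replaced by its clamp to [0, 1], which changes no conditional moment. *)

Section bounded_mfun.
Context d (T : measurableType d) (R : realType).
Implicit Types (A : set T) (X Y : T -> R).

Definition bounded_mfun X :=
  measurable_fun setT X /\ exists M : R, forall t, `|X t| <= M.

Lemma bounded_mfun_cst a : bounded_mfun (fun _ => a).
Proof. by split; [exact: measurable_cst | exists `|a|]. Qed.

Lemma bounded_mfunD X Y : bounded_mfun X -> bounded_mfun Y ->
  bounded_mfun (fun t => X t + Y t).
Proof.
case=> mX [M hM] [mY [N hN]]; split; first exact: measurable_funD.
by exists (M + N) => t; rewrite (le_trans (ler_normD _ _))// lerD.
Qed.

Lemma bounded_mfunN X : bounded_mfun X -> bounded_mfun (fun t => - X t).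
Proof.
case=> mX [M hM]; split; first exact: measurableT_comp.
by exists M => t; rewrite normrN.
Qed.

Lemma bounded_mfunB X Y : bounded_mfun X -> bounded_mfun Y ->
  bounded_mfun (fun t => X t - Y t).
Proof. by move=> hX hY; apply/bounded_mfunD/bounded_mfunN. Qed.

Lemma bounded_mfunM X Y : bounded_mfun X -> bounded_mfun Y ->
  bounded_mfun (fun t => X t * Y t).
Proof.
case=> mX [M hM] [mY [N hN]]; split; first exact: measurable_funM.
by exists (M * N) => t; rewrite normrM ler_pM.
Qed.

Lemma bounded_mfunZ a X : bounded_mfun X -> bounded_mfun (fun t => a * X t).
Proof. exact/bounded_mfunM/bounded_mfun_cst. Qed.

Lemma bounded_mfun_sqr X : bounded_mfun X -> bounded_mfun (fun t => X t ^+ 2).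
Proof. by move=> hX; apply: bounded_mfunM. Qed.

Lemma bounded_mfun_indic A : measurable A -> bounded_mfun (\1_A : T -> R).
Proof.
move=> mA; split; first exact: measurable_indic.
by exists 1 => t; rewrite indicE; case: (_ \in _); rewrite ?normr1 ?normr0.
Qed.

Lemma bounded_mfun_sum (I : Type) (s : seq I) (F : I -> T -> R) :
  (forall i, bounded_mfun (F i)) -> bounded_mfun (fun t => \sum_(i <- s) F i t).
Proof.
move=> hF; elim: s => [|i s IH].
  by under eq_fun do rewrite big_nil; exact: bounded_mfun_cst.
by under eq_fun do rewrite big_cons; exact: bounded_mfunD.
Qed.

Lemma bounded_mfun01 X : measurable_fun setT X -> (forall t, 0 <= X t <= 1) ->
  bounded_mfun X.
Proof.
move=> mX X01; split => //; exists 1 => t.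
by have /andP[X0 X1] := X01 t; rewrite ger0_norm.
Qed.

End bounded_mfun.

Ltac bounded_mfun_tac := repeat first
  [ assumption | apply: bounded_mfun_sqr | apply: bounded_mfunD
  | apply: bounded_mfunB | apply: bounded_mfunN | apply: bounded_mfunM
  | apply: bounded_mfunZ | apply: bounded_mfun_cst ].

Section real_expectation.
Context d (T : measurableType d) (R : realType) (P : probability T R).
Implicit Types (A : set T) (X Y : T -> R).

Lemma bounded_mfun_integrable X : bounded_mfun X -> P.-integrable setT (EFin \o X).
Proof.
case=> mX [M hM]; apply: measurable_bounded_integrable => //.
  exact: (le_lt_trans (probability_le1 P measurableT) (ltry 1)).
exists M; split; first exact: num_real.
by move=> y My t _ /=; exact: le_trans (hM t) (ltW My).
Qed.

Definition rexpect X : R := fine ('E_P[X])%E.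

Lemma expectation_rexpect X : bounded_mfun X -> ('E_P[X] = (rexpect X)%:E)%E.
Proof.
move=> hX; rewrite /rexpect fineK// unlock.
exact/integrable_fin_num/bounded_mfun_integrable.
Qed.

Lemma rexpectD X Y : bounded_mfun X -> bounded_mfun Y ->
  rexpect (fun t => X t + Y t) = rexpect X + rexpect Y.
Proof.
move=> hX hY; apply: EFin_inj; rewrite EFinD -!expectation_rexpect//;
  last exact: bounded_mfunD.
rewrite unlock; under eq_integral do rewrite EFinD.
exact: integralD_EFin (bounded_mfun_integrable hX) (bounded_mfun_integrable hY).
Qed.

Lemma rexpectZ a X : bounded_mfun X -> rexpect (fun t => a * X t) = a * rexpect X.
Proof.
move=> hX; apply: EFin_inj; rewrite EFinM -!expectation_rexpect//;
  last exact: bounded_mfunZ.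
rewrite unlock; under eq_integral do rewrite EFinM.
exact: (integralZl _ (bounded_mfun_integrable hX)).
Qed.

Lemma rexpectN X : bounded_mfun X -> rexpect (fun t => - X t) = - rexpect X.
Proof.
move=> hX; rewrite -mulN1r -rexpectZ//.
by congr rexpect; apply/funext => t; rewrite mulN1r.
Qed.

Lemma rexpectB X Y : bounded_mfun X -> bounded_mfun Y ->
  rexpect (fun t => X t - Y t) = rexpect X - rexpect Y.
Proof. by move=> hX hY; rewrite rexpectD ?rexpectN//; exact: bounded_mfunN. Qed.

Lemma rexpect_ge0 X : (forall t, 0 <= X t) -> 0 <= rexpect X.
Proof. by move=> X0; apply/fine_ge0/expectation_ge0. Qed.

Lemma rexpect_cst a : rexpect (fun _ => a) = a.
Proof. by rewrite /rexpect (expectation_cst P a). Qed.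

Lemma rexpect_sum (I : Type) (s : seq I) (F : I -> T -> R) :
  (forall i, bounded_mfun (F i)) ->
  rexpect (fun t => \sum_(i <- s) F i t) = \sum_(i <- s) rexpect (F i).
Proof.
move=> hF; elim: s => [|i s IH].
  by under eq_fun do rewrite big_nil; rewrite big_nil rexpect_cst.
under eq_fun do rewrite big_cons.
by rewrite big_cons rexpectD ?IH//; exact: bounded_mfun_sum.
Qed.

Lemma ler_rexpect X Y : bounded_mfun X -> bounded_mfun Y ->
  (forall t, X t <= Y t) -> rexpect X <= rexpect Y.
Proof.
move=> hX hY XY; rewrite -subr_ge0 -rexpectB//.
by apply: rexpect_ge0 => t; rewrite subr_ge0.
Qed.

Definition rexpect_on A X := rexpect (fun t => X t * \1_A t).

Lemma condE_evE A X : condE_ev P A X = rexpect_on A X / fine (P A).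
Proof. by []. Qed.

Let bounded_mfun_restrict A X : measurable A -> bounded_mfun X ->
  bounded_mfun (fun t => X t * \1_A t).
Proof. by move=> mA hX; apply: bounded_mfunM => //; exact: bounded_mfun_indic. Qed.

Lemma rexpect_on_congr A X Y : (forall t, A t -> X t = Y t) ->
  rexpect_on A X = rexpect_on A Y.
Proof.
move=> XY; congr rexpect; apply/funext => t; rewrite indicE.
by case: (boolP (t \in A)) => [/set_mem/XY ->|]; rewrite ?mulr0.
Qed.

Lemma rexpect_onD A X Y : measurable A -> bounded_mfun X -> bounded_mfun Y ->
  rexpect_on A (fun t => X t + Y t) = rexpect_on A X + rexpect_on A Y.
Proof.
move=> mA hX hY; rewrite /rexpect_on -rexpectD; try exact: bounded_mfun_restrict.
by under eq_fun do rewrite mulrDl.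
Qed.

Lemma rexpect_onZ A a X : measurable A -> bounded_mfun X ->
  rexpect_on A (fun t => a * X t) = a * rexpect_on A X.
Proof.
move=> mA hX; rewrite /rexpect_on -rexpectZ; last exact: bounded_mfun_restrict.
by under eq_fun do rewrite -mulrA.
Qed.

Lemma rexpect_on_ge0 A X : (forall t, A t -> 0 <= X t) -> 0 <= rexpect_on A X.
Proof.
move=> X0; apply: rexpect_ge0 => t; rewrite indicE.
by case: (boolP (t \in A)) => [/set_mem/X0|]; rewrite ?mulr1 ?mulr0.
Qed.

Lemma ler_rexpect_on A X Y : measurable A -> bounded_mfun X -> bounded_mfun Y ->
  (forall t, A t -> X t <= Y t) -> rexpect_on A X <= rexpect_on A Y.
Proof.
move=> mA hX hY XY; apply: ler_rexpect; try exact: bounded_mfun_restrict.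
move=> t; rewrite indicE.
by case: (boolP (t \in A)) => [/set_mem/XY|]; rewrite ?mulr1 ?mulr0.
Qed.

Lemma rexpect_on_cst A a : measurable A -> rexpect_on A (fun _ => a) = a * fine (P A).
Proof.
move=> mA; rewrite /rexpect_on (rexpectZ a (bounded_mfun_indic R mA)).
by rewrite /rexpect expectation_indic.
Qed.

(* When [P A = 0] the quotient [condE_ev P A X] is [0]; the identity still
   holds because [X] is bounded. *)
Lemma rexpect_on_mean A X : measurable A -> bounded_mfun X ->
  rexpect_on A X = condE_ev P A X * fine (P A).
Proof.
move=> mA hX; rewrite condE_evE.
have [PA0|PA_neq0] := eqVneq (fine (P A)) 0; last by rewrite divfK.
have [_ [M hM]] := hX; rewrite PA0 mulr0; apply/eqP; rewrite eq_le.
have X_ge t : - M <= X t by have := hM t; rewrite ler_norml => /andP[].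
have X_le t : X t <= M by have := hM t; rewrite ler_norml => /andP[].
have := ler_rexpect_on mA hX (bounded_mfun_cst T M) (fun t _ => X_le t).
have := ler_rexpect_on mA (bounded_mfun_cst T (- M)) hX (fun t _ => X_ge t).
by rewrite !rexpect_on_cst// PA0 !mulr0 => -> ->.
Qed.

Lemma rexpect_on_CauchySchwarz A X Y : measurable A ->
  bounded_mfun X -> bounded_mfun Y ->
  rexpect_on A (fun t => X t * Y t) ^+ 2 <=
  rexpect_on A (fun t => X t ^+ 2) * rexpect_on A (fun t => Y t ^+ 2).
Proof.
move=> mA hX hY.
set a := rexpect_on A (fun t => X t ^+ 2); set b := rexpect_on A (fun t => X t * Y t).
set c := rexpect_on A (fun t => Y t ^+ 2).
have quad r : 0 <= a - 2 * r * b + r ^+ 2 * c.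
  have -> : a - 2 * r * b + r ^+ 2 * c = rexpect_on A (fun t =>
      X t ^+ 2 + (- (2 * r)) * (X t * Y t) + r ^+ 2 * Y t ^+ 2).
    by rewrite !rexpect_onD ?rexpect_onZ//; bounded_mfun_tac; rewrite mulNr.
  apply: rexpect_on_ge0 => t _.
  by rewrite (_ : _ + _ = (X t - r * Y t) ^+ 2) ?sqr_ge0//; ring.
have c0 : 0 <= c by apply: rexpect_on_ge0 => t _; exact: sqr_ge0.
have [c00|c_neq0] := eqVneq c 0.
  have [b00|b_neq0] := eqVneq b 0; first by rewrite b00 c00 expr0n mulr0.
  (* for [c = 0] the quadratic is affine in [r], so nonnegativity forces [b = 0] *)
  have := quad ((a + 1) / (2 * b)); rewrite c00 mulr0 addr0.
  have -> : 2 * ((a + 1) / (2 * b)) * b = a + 1 by field.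
  by move=> ?; lra.
have cp : 0 < c by rewrite lt_def c_neq0 c0.
have := quad (b / c).
have -> : a - 2 * (b / c) * b + (b / c) ^+ 2 * c = (a * c - b ^+ 2) / c by field.
by rewrite pmulr_lge0 ?invr_gt0// subr_ge0 mulrC.
Qed.

End real_expectation.

Section conditional_moments.
Context d (T : measurableType d) (R : realType) (P : probability T R).
Implicit Types (A : set T) (X W : T -> R).

Definition condVar_ev A X :=
  condE_ev P A (fun u => (X u - condE_ev P A X) ^+ 2).

Definition condCov_ev A X W :=
  condE_ev P A (fun u => (X u - condE_ev P A X) * (W u - condE_ev P A W)).

Lemma condE_ev_congr A X X' : (forall t, A t -> X t = X' t) ->
  condE_ev P A X = condE_ev P A X'.
Proof. by move=> XX'; rewrite !condE_evE (rexpect_on_congr _ XX'). Qed.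

Lemma condVar_givenE (Z : T -> R) X t :
  condVar_given P Z X t = condVar_ev (Z @^-1` [set Z t]) X.
Proof. by apply: condE_ev_congr => u; rewrite /condE_given => /= ->. Qed.

Lemma condCov_givenE (Z : T -> R) X W t :
  condCov_given P Z X W t = condCov_ev (Z @^-1` [set Z t]) X W.
Proof. by apply: condE_ev_congr => u; rewrite /condE_given => /= ->. Qed.

Lemma condE_given_ae (Z X X' : T -> R) :
  (forall z, measurable (Z @^-1` [set z])) ->
  measurable_fun setT X -> measurable_fun setT X' ->
  {ae P, forall t, X t = X' t} -> condE_given P Z X = condE_given P Z X'.
Proof.
move=> mZ mX mX' XX'; apply/funext => t; rewrite /condE_given /condE_ev.
congr (fine _ / _); rewrite unlock; apply: ae_eq_integral => //;
  try by apply/measurable_EFinP; apply: measurable_funM => //; exact: measurable_indic.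
by apply: filterS XX' => u /= ->.
Qed.

Lemma condVar_ev_ge0 A X : 0 <= condVar_ev A X.
Proof.
rewrite /condVar_ev condE_evE; apply: divr_ge0; last exact: fine_ge0.
by apply: rexpect_on_ge0 => t _; exact: sqr_ge0.
Qed.

Section on_event.
Variable A : set T.
Hypothesis mA : measurable A.

Lemma condE_evD X W : bounded_mfun X -> bounded_mfun W ->
  condE_ev P A (fun t => X t + W t) = condE_ev P A X + condE_ev P A W.
Proof. by move=> hX hW; rewrite !condE_evE rexpect_onD// mulrDl. Qed.

Lemma condE_evZ a X : bounded_mfun X ->
  condE_ev P A (fun t => a * X t) = a * condE_ev P A X.
Proof. by move=> hX; rewrite !condE_evE rexpect_onZ// mulrA. Qed.

Lemma condVar_evB X W : bounded_mfun X -> bounded_mfun W ->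
  condVar_ev A (fun t => X t - W t) =
  condVar_ev A X - 2 * condCov_ev A X W + condVar_ev A W.
Proof.
move=> hX hW; rewrite /condVar_ev /condCov_ev.
have -> : condE_ev P A (fun t => X t - W t) = condE_ev P A X - condE_ev P A W.
  transitivity (condE_ev P A (fun t => X t + (-1) * W t)).
    by apply: condE_ev_congr => t _; rewrite mulN1r.
  by rewrite condE_evD ?condE_evZ ?mulN1r//; exact: bounded_mfunZ.
set mX := condE_ev P A X; set mW := condE_ev P A W.
transitivity (condE_ev P A (fun t => (X t - mX) ^+ 2
    + (-2) * ((X t - mX) * (W t - mW)) + (W t - mW) ^+ 2)).
  by apply: condE_ev_congr => t _; ring.
rewrite condE_evD ?condE_evD ?condE_evZ; try by bounded_mfun_tac.
ring.
Qed.

Lemma condCov_ev_sqr_le X W : bounded_mfun X -> bounded_mfun W ->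
  condCov_ev A X W ^+ 2 <= condVar_ev A X * condVar_ev A W.
Proof.
move=> hX hW; rewrite /condVar_ev /condCov_ev !condE_evE.
rewrite expr_div_n mulf_div -expr2 ler_wpM2r ?invr_ge0 ?sqr_ge0//.
by apply: rexpect_on_CauchySchwarz => //; bounded_mfun_tac.
Qed.

(* Bhatia–Davis: a variable with values in [a, b] and mean m has variance
   at most (b - m) (m - a), because (X - a) (b - X) >= 0. *)
Lemma rexpect_on_sqr_dev_le X a b : bounded_mfun X ->
  (forall t, A t -> a <= X t <= b) ->
  rexpect_on P A (fun t => (X t - condE_ev P A X) ^+ 2) <=
  (b - condE_ev P A X) * (condE_ev P A X - a) * fine (P A).
Proof.
move=> hX Xab; set m := condE_ev P A X.
have -> : (b - m) * (m - a) * fine (P A) = rexpect_on P A (fun t =>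
    (a + b - 2 * m) * X t + ((b - m) * (m - a) - (a + b - 2 * m) * m)).
  rewrite rexpect_onD ?rexpect_onZ ?rexpect_on_cst ?rexpect_on_mean -/m//;
    try by bounded_mfun_tac.
  ring.
apply: ler_rexpect_on => //; try by bounded_mfun_tac.
by move=> t /Xab /andP[aX Xb]; nra.
Qed.

Lemma condVar_ev_le X a b : fine (P A) != 0 -> bounded_mfun X ->
  (forall t, A t -> a <= X t <= b) ->
  condVar_ev A X <= (b - condE_ev P A X) * (condE_ev P A X - a).
Proof.
move=> PA_neq0 hX Xab; rewrite /condVar_ev condE_evE.
have PA_gt0 : 0 < fine (P A) by rewrite lt_def PA_neq0 fine_ge0.
by rewrite ler_pdivrMr//; exact: rexpect_on_sqr_dev_le.
Qed.

End on_event.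
End conditional_moments.

Section covariance_bounds.
Variable R : rcfType.
Implicit Types (vX vY c w v : R).

Lemma two_cov_sub_var_bounds vX vY c :
  0 <= vX -> 0 <= vY -> c ^+ 2 <= vX * vY ->
  - (Num.sqrt vX * (2 * Num.sqrt vY + Num.sqrt vX)) <= 2 * c - vX
  <= Num.sqrt vX * (2 * Num.sqrt vY - Num.sqrt vX).
Proof.
move=> vX0 vY0 cXY.
have : `|c| <= Num.sqrt vX * Num.sqrt vY.
  by rewrite -sqrtrM// -sqrtr_sqr ler_wsqrtr.
rewrite ler_norml -[in 2 * c - vX](sqr_sqrtr vX0) => /andP[lo up].
apply/andP; split; nra.
Qed.

Lemma two_cov_sub_var_bounds_le vX vY c w v :
  0 <= vX -> 0 <= vY -> c ^+ 2 <= vX * vY -> 0 <= w -> vX <= w ^+ 2 -> vY <= v ->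
  - (2 * w * Num.sqrt v) - w ^+ 2 <= 2 * c - vX <= 2 * w * Num.sqrt v.
Proof.
move=> vX0 vY0 cXY w0 vXw vYv.
have /andP[lo up] := two_cov_sub_var_bounds vX0 vY0 cXY.
have sX_le : Num.sqrt vX <= w by rewrite -(ger0_norm w0) -sqrtr_sqr ler_wsqrtr.
have sXY_le : Num.sqrt vX * Num.sqrt vY <= w * Num.sqrt v.
  by rewrite ler_pM ?sqrtr_ge0 ?ler_wsqrtr.
have sX0 := sqrtr_ge0 vX.
apply/andP; split; nra.
Qed.

End covariance_bounds.

Section binned_score.
Context d (T : measurableType d) (R : realType) (P : probability T R).
Context (S : T -> R) (J : nat) (B : 'I_J -> set R).
Hypothesis mS : measurable_fun setT S.
Hypothesis S01 : forall t, 0 <= S t <= 1.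
Hypothesis hB : interval_partition01 B.

Local Notation SB := (binned_score P B S).

Definition bin_mean j := condE_ev P (S @^-1` B j) S.

Lemma exists_bin t : exists j, B j (S t).
Proof.
case: hB => _ _ cover.
have : `[0, 1]%classic (S t) by rewrite /= in_itv /= S01.
by rewrite -cover => -[j _ Bj]; exists j.
Qed.

Lemma bin_uniq j k x : B j x -> B k x -> j = k.
Proof.
case: hB => _ disj _ Bj Bk; apply/eqP; apply: contraT => jk.
have : (B j `&` B k) x by split.
by rewrite (disj _ _ jk).
Qed.

Lemma measurable_bin j : measurable (S @^-1` B j).
Proof.
case: hB => itv _ _; rewrite -[_ @^-1` _]setTI; apply: mS => //.
exact: is_interval_measurable.
Qed.

Lemma sum_indic_bin j t (F : 'I_J -> R) : B j (S t) ->
  \sum_(k < J) \1_(S @^-1` B k) t * F k = F j.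
Proof.
move=> Bj; rewrite (bigD1 j)//= big1 ?addr0; first by rewrite indicE mem_set ?mul1r.
move=> k kj; rewrite indicE memNset ?mul0r//= => Bk.
by move/eqP: kj; apply; exact: bin_uniq Bk Bj.
Qed.

Lemma binned_scoreE j t : B j (S t) -> SB t = bin_mean j.
Proof. by move=> Bj; rewrite /binned_score (sum_indic_bin _ Bj). Qed.

Lemma bounded_mfun_comp_binned (H : R -> R) : bounded_mfun (fun t => H (SB t)).
Proof.
have -> : (fun t => H (SB t)) =
    (fun t => \sum_(k < J) \1_(S @^-1` B k) t * H (bin_mean k)).
  apply/funext => t; have [j Bj] := exists_bin t.
  by rewrite (binned_scoreE Bj) (sum_indic_bin _ Bj).
apply: bounded_mfun_sum => k; apply: bounded_mfunM; last exact: bounded_mfun_cst.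
exact/bounded_mfun_indic/measurable_bin.
Qed.

(* Any function constant on the level sets of [SB] factors through [SB]. *)
Lemma bounded_mfun_binned (G : T -> R) :
  (forall u v, SB u = SB v -> G u = G v) -> bounded_mfun G.
Proof.
move=> hG.
pose H z := if pselect (exists u, SB u = z) is left e then G (projT1 (cid e)) else 0.
suff -> : G = (fun t => H (SB t)) by exact: bounded_mfun_comp_binned.
apply/funext => t; rewrite /H; case: pselect => [e|]; last by case; exists t.
by case: cid => u /= /hG.
Qed.

Lemma bounded_mfun_condE_binned X : bounded_mfun (condE_given P SB X).
Proof. by apply: bounded_mfun_binned => u v E; rewrite /condE_given E. Qed.

Lemma measurable_binned_level z : measurable (SB @^-1` [set z]).
Proof.
have [mSB _] := bounded_mfun_comp_binned id.
by rewrite -[_ @^-1` _]setTI; exact: mSB.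
Qed.

Lemma indic_binned_level t u : \1_(SB @^-1` [set SB t]) u =
  \sum_(k < J) \1_(S @^-1` B k) u * (bin_mean k == SB t)%:R :> R.
Proof.
have [j Bj] := exists_bin u.
rewrite (sum_indic_bin _ Bj) indicE.
by case: (boolP (bin_mean j == SB t)) => /eqP h;
  [rewrite mem_set | rewrite memNset] => //=; rewrite (binned_scoreE Bj).
Qed.

Lemma rexpect_on_binned_level t X : bounded_mfun X ->
  rexpect_on P (SB @^-1` [set SB t]) X =
  \sum_(k < J) (bin_mean k == SB t)%:R * rexpect_on P (S @^-1` B k) X.
Proof.
move=> hX; rewrite /rexpect_on.
have bounded_term k : bounded_mfun (fun u => X u * \1_(S @^-1` B k) u).
  by apply: bounded_mfunM => //; exact/bounded_mfun_indic/measurable_bin.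
transitivity (rexpect P (fun u =>
    \sum_(k < J) (bin_mean k == SB t)%:R * (X u * \1_(S @^-1` B k) u))).
  congr rexpect; apply/funext => u; rewrite indic_binned_level mulr_sumr.
  by apply: eq_bigr => k _; ring.
rewrite rexpect_sum => [|k]; last exact/bounded_mfunZ/bounded_term.
by apply: eq_bigr => k _; rewrite rexpectZ.
Qed.

Lemma rexpect_on_bin_sqr_dev_le k : equal_width_bins B ->
  rexpect_on P (S @^-1` B k) (fun t => (S t - bin_mean k) ^+ 2) <=
  (2 * J%:R)^-1 ^+ 2 * fine (P (S @^-1` B k)).
Proof.
move=> ew; have J_neq0 : J%:R != 0 :> R.
  by rewrite pnatr_eq0 -lt0n (leq_ltn_trans (leq0n k) (ltn_ord k)).
pose a : R := k%:R / J%:R; pose b : R := k.+1%:R / J%:R.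
have -> : (2 * J%:R)^-1 = (b - a) / 2 by rewrite /a /b -addn1 natrD; field.
have Sab t : (S @^-1` B k) t -> a <= S t <= b.
  by move=> /(proj2 (ew k)); rewrite /= in_itv.
apply: le_trans (rexpect_on_sqr_dev_le P (measurable_bin k)
  (bounded_mfun01 mS S01) Sab) _.
rewrite ler_wpM2r ?fine_ge0//.
have := sqr_ge0 (bin_mean k - (a + b) / 2); rewrite /bin_mean; nra.
Qed.

Lemma condVar_binned_level_le t : equal_width_bins B ->
  condVar_ev P (SB @^-1` [set SB t]) S <= (2 * J%:R)^-1 ^+ 2.
Proof.
move=> ew; set L := SB @^-1` [set SB t].
have mL : measurable L := measurable_binned_level (SB t).
have bS : bounded_mfun S := bounded_mfun01 mS S01.
have PL : fine (P L) = \sum_(k < J) (bin_mean k == SB t)%:R * fine (P (S @^-1` B k)).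
  rewrite -[LHS]mul1r -rexpect_on_cst// rexpect_on_binned_level;
    last exact: bounded_mfun_cst.
  by apply: eq_bigr => k _; rewrite rexpect_on_cst ?mul1r//; exact: measurable_bin.
have [PL0|PL_neq0] := eqVneq (fine (P L)) 0.
  by rewrite /condVar_ev condE_evE PL0 invr0 mulr0 sqr_ge0.
have mean_L : condE_ev P L S = SB t.
  apply: (mulIf PL_neq0); rewrite -rexpect_on_mean// rexpect_on_binned_level//.
  rewrite PL mulr_sumr; apply: eq_bigr => k _.
  rewrite rexpect_on_mean //; last exact: measurable_bin.
  by case: eqP => [<-|_]; rewrite ?mul0r ?mulr0 ?mul1r.
have PL_gt0 : 0 < fine (P L) by rewrite lt_def PL_neq0 fine_ge0.
rewrite /condVar_ev condE_evE mean_L ler_pdivrMr// rexpect_on_binned_level;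
  last by bounded_mfun_tac.
rewrite PL mulr_sumr; apply: ler_sum => k _.
case: eqP => [<-|_]; last by rewrite !mul0r mulr0.
by rewrite !mul1r; exact: rexpect_on_bin_sqr_dev_le.
Qed.

End binned_score.

Section induced_loss.
Context d (T : measurableType d) (R : realType) (P : probability T R).
Context (J : nat) (B : 'I_J -> set R).

Definition induced_loss_bounds (S C : T -> R) : Prop :=
  let SB := binned_score P B S in
  let CB := condE_given P SB C in
  let CL := (- 'E_P[condVar_given P SB (fun t => S t - C t)%R])%E in
  let GL := ('E_P[condVar_given P SB C])%E in
  [/\ (CL + GL = 'E_P[(fun t => 2 * condCov_given P SB S C t
                               - condVar_given P SB S t)%R])%E,
      (- 'E_P[(fun t => Num.sqrt (condVar_given P SB S t)
               * (2 * Num.sqrt (condVar_given P SB C t)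
                  + Num.sqrt (condVar_given P SB S t)))%R] <= CL + GL)%E,
      (CL + GL <= 'E_P[(fun t => Num.sqrt (condVar_given P SB S t)
               * (2 * Num.sqrt (condVar_given P SB C t)
                  - Num.sqrt (condVar_given P SB S t)))%R])%E &
      (equal_width_bins B ->
       (- (J%:R^-1)%:E * 'E_P[(fun t => Num.sqrt (CB t * (1 - CB t)))%R]
          - ((4 * J%:R ^+ 2)^-1)%:E <= CL + GL)%E /\
       (CL + GL <= (J%:R^-1)%:E * 'E_P[(fun t => Num.sqrt (CB t * (1 - CB t)))%R])%E)].

Variable S : T -> R.
Hypothesis mS : measurable_fun setT S.
Hypothesis S01 : forall t, 0 <= S t <= 1.
Hypothesis hB : interval_partition01 B.

Local Notation SB := (binned_score P B S).

Let mL z : measurable (SB @^-1` [set z]) := measurable_binned_level P mS S01 hB z.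

Section in01.
Variable C : T -> R.
Hypothesis mC : measurable_fun setT C.
Hypothesis C01 : forall t, 0 <= C t <= 1.

Let bS : bounded_mfun S := bounded_mfun01 mS S01.
Let bC : bounded_mfun C := bounded_mfun01 mC C01.

Lemma cov_sub_var_identity t :
  2 * condCov_given P SB S C t - condVar_given P SB S t =
  condVar_given P SB C t - condVar_given P SB (fun u => S u - C u) t.
Proof.
by rewrite !condVar_givenE condCov_givenE condVar_evB//; ring.
Qed.

Lemma cov_sub_var_bounds t :
  - (Num.sqrt (condVar_given P SB S t) * (2 * Num.sqrt (condVar_given P SB C t)
      + Num.sqrt (condVar_given P SB S t)))
  <= 2 * condCov_given P SB S C t - condVar_given P SB S t
  <= Num.sqrt (condVar_given P SB S t) * (2 * Num.sqrt (condVar_given P SB C t)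
      - Num.sqrt (condVar_given P SB S t)).
Proof.
rewrite !condVar_givenE condCov_givenE.
apply: two_cov_sub_var_bounds; rewrite ?condVar_ev_ge0//.
exact: condCov_ev_sqr_le.
Qed.

Lemma cov_sub_var_bounds_equal_width t : equal_width_bins B ->
  - (J%:R^-1) * Num.sqrt (condE_given P SB C t * (1 - condE_given P SB C t))
    - (4 * J%:R ^+ 2)^-1
  <= 2 * condCov_given P SB S C t - condVar_given P SB S t
  <= J%:R^-1 * Num.sqrt (condE_given P SB C t * (1 - condE_given P SB C t)).
Proof.
move=> ew; have [j _] := exists_bin S01 hB t.
have J_neq0 : J%:R != 0 :> R.
  by rewrite pnatr_eq0 -lt0n (leq_ltn_trans (leq0n j) (ltn_ord j)).
have -> : J%:R^-1 = 2 * (2 * J%:R)^-1 :> R by field.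
have -> : (4 * J%:R ^+ 2)^-1 = (2 * J%:R)^-1 ^+ 2 :> R by field.
rewrite mulNr !condVar_givenE condCov_givenE /condE_given.
set L := SB @^-1` [set SB t].
apply: (two_cov_sub_var_bounds_le (vY := condVar_ev P L C));
  rewrite ?condVar_ev_ge0 ?invr_ge0 ?mulr_ge0//.
- exact: (condCov_ev_sqr_le P (mL (SB t)) bS bC).
- exact: (condVar_binned_level_le P mS S01 hB t ew).
have [PL0|PL_neq0] := eqVneq (fine (P L)) 0.
  by rewrite /condVar_ev !condE_evE PL0 !invr0 !mulr0 mul0r.
have := condVar_ev_le (mL (SB t)) PL_neq0 bC (a := 0) (b := 1) (fun t _ => C01 t).
by rewrite subr0 mulrC.
Qed.

Lemma induced_loss_bounds_in01 : induced_loss_bounds S C.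
Proof.
pose sqCB t := Num.sqrt (condE_given P SB C t * (1 - condE_given P SB C t)).
pose lo t := Num.sqrt (condVar_given P SB S t)
  * (2 * Num.sqrt (condVar_given P SB C t) + Num.sqrt (condVar_given P SB S t)).
pose up t := Num.sqrt (condVar_given P SB S t)
  * (2 * Num.sqrt (condVar_given P SB C t) - Num.sqrt (condVar_given P SB S t)).
pose F t := 2 * condCov_given P SB S C t - condVar_given P SB S t.
have level_fun (G : T -> R) : (forall u v, SB u = SB v -> G u = G v) -> bounded_mfun G.
  exact: bounded_mfun_binned.
have [bVD bVC bF blo bup] : [/\ bounded_mfun (condVar_given P SB (fun t => S t - C t)),
    bounded_mfun (condVar_given P SB C), bounded_mfun F, bounded_mfun lo
    & bounded_mfun up].
  by split; apply: level_fun => u v E;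
    cbv beta delta [F lo up condVar_given condCov_given condE_given]; rewrite E.
have bsq : bounded_mfun sqCB.
  by apply: level_fun => u v E; rewrite /sqCB /condE_given E.
have EF : ('E_P[F] = - 'E_P[condVar_given P SB (fun t => S t - C t)%R]
                     + 'E_P[condVar_given P SB C])%E.
  rewrite !expectation_rexpect// -EFinN -EFinD addrC -rexpectB//.
  by congr (rexpect P _)%:E; apply/funext => t; rewrite /F cov_sub_var_identity.
rewrite /induced_loss_bounds; cbv zeta; rewrite -EF; split => //.
- rewrite !expectation_rexpect// -EFinN lee_fin -rexpectN//.
  apply: ler_rexpect; try by bounded_mfun_tac.
  by move=> t; case/andP: (cov_sub_var_bounds t).
- rewrite !expectation_rexpect// lee_fin.
  apply: ler_rexpect => // t.
  by case/andP: (cov_sub_var_bounds t).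
move=> ew; rewrite !expectation_rexpect//; split.
- rewrite -EFinM -EFinB lee_fin -rexpectZ//.
  rewrite -(rexpect_cst P (4 * J%:R ^+ 2)^-1) -rexpectB; try by bounded_mfun_tac.
  apply: ler_rexpect; try by bounded_mfun_tac.
  by move=> t; case/andP: (cov_sub_var_bounds_equal_width t ew).
- rewrite -EFinM lee_fin -rexpectZ//.
  apply: ler_rexpect; try by bounded_mfun_tac.
  by move=> t; case/andP: (cov_sub_var_bounds_equal_width t ew).
Qed.

End in01.

Section almost_sure.
Let measurable_condE X : measurable_fun setT (condE_given P SB X) :=
  (bounded_mfun_condE_binned P mS S01 hB X).1.

Lemma condVar_binned_ae X X' : measurable_fun setT X -> measurable_fun setT X' ->
  {ae P, forall t, X t = X' t} -> condVar_given P SB X = condVar_given P SB X'.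
Proof.
move=> mX mX' XX'; rewrite /condVar_given (condE_given_ae mL mX mX' XX').
apply: condE_given_ae => //; try by apply/measurable_funX/measurable_funB.
by apply: filterS XX' => u /= ->.
Qed.

Lemma condCov_binned_ae X W W' : measurable_fun setT X ->
  measurable_fun setT W -> measurable_fun setT W' ->
  {ae P, forall t, W t = W' t} -> condCov_given P SB X W = condCov_given P SB X W'.
Proof.
move=> mX mW mW' WW'; rewrite /condCov_given (condE_given_ae mL mW mW' WW').
apply: condE_given_ae => //; try by apply/measurable_funM; exact/measurable_funB.
by apply: filterS WW' => u /= ->.
Qed.

Lemma induced_loss_bounds_ae (C : T -> R) : measurable_fun setT C ->
  {ae P, forall t, 0 <= C t <= 1} -> induced_loss_bounds S C.
Proof.
move=> mC C01.
pose C' t := Num.min (Num.max (C t) 0) 1.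
have mC' : measurable_fun setT C'.
  by apply: measurable_minr; [exact: measurable_maxr | exact: measurable_cst].
have C'01 t : 0 <= C' t <= 1.
  by rewrite /C' le_min le_max lexx orbT ler01 /= ge_min lexx orbT.
have CC' : {ae P, forall t, C t = C' t}.
  by apply: filterS C01 => t /andP[C0 C1]; rewrite /C' max_l// min_l.
have mSC : measurable_fun setT (fun t => S t - C t) by exact: measurable_funB.
have mSC' : measurable_fun setT (fun t => S t - C' t) by exact: measurable_funB.
have SCC' : {ae P, forall t, S t - C t = S t - C' t}.
  by apply: filterS CC' => t ->.
have := induced_loss_bounds_in01 mC' C'01.
rewrite /induced_loss_bounds (condVar_binned_ae mSC mSC' SCC').
by rewrite (condVar_binned_ae mC mC' CC') (condCov_binned_ae mS mC mC' CC')
  (condE_given_ae mL mC mC' CC').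
Qed.

End almost_sure.

End induced_loss.

Section is_cond_exp_in01.
Context d (T : measurableType d) (R : realType) (P : probability T R).

Lemma measure0_of_integral0 (F : T -> R) (D : set T) : measurable D ->
  P.-integrable setT (EFin \o (fun t => F t * \1_D t)) ->
  (\int[P]_t (F t * \1_D t)%:E = 0)%E -> (forall t, D t -> 0 < F t) -> P D = 0.
Proof.
move=> mD iF F0 F_gt0.
have F_ge0 t : 0 <= F t * \1_D t.
  rewrite indicE; case: (boolP (t \in D)) => [/set_mem/F_gt0/ltW|];
  by rewrite ?mulr1 ?mulr0.
have : (\int[P]_t `|(F t * \1_D t)%:E| = 0)%E.
  by rewrite -F0; apply: eq_integral => t _; rewrite gee0_abs// lee_fin.
move/(ae_eq_integral_abs P measurableT (measurable_int P iF)) => [N [mN PN sub]].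
apply: (subset_measure0 mD mN _ PN) => t Dt; apply: sub => /= /(_ I).
by rewrite /= indicE mem_set// mulr1 => -[] /eqP; rewrite gt_eqF// F_gt0.
Qed.

Let integrable_mul_indic (F : T -> R) (D : set T) : measurable D ->
  P.-integrable setT (EFin \o F) ->
  P.-integrable setT (EFin \o (fun t => F t * \1_D t)).
Proof.
move=> mD iF; have -> : EFin \o (fun t => F t * \1_D t) =
    ((EFin \o F) \* (EFin \o (\1_D : T -> R)))%E.
  by apply/funext => t /=; rewrite -EFinM.
apply: integrableMl; [by [] | exact: iF | exact: measurable_indic |].
exists 1; split; first exact: num_real.
move=> y y_gt1 t _ /=; apply: le_trans (ltW y_gt1).
by rewrite indicE; case: (_ \in _); rewrite ?normr1 ?normr0.
Qed.

Context d' (T' : measurableType d') (Z : T -> T') (X W : T -> R).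
Hypothesis mZ : measurable_fun setT Z.
Hypothesis iX : P.-integrable setT (EFin \o X).
Hypothesis XW : is_cond_exp P Z X W.

(* [sg] is a sign, so that one lemma covers both [W > X] and [W < X]. *)
Lemma is_cond_exp_null (D : set T') (sg : R) : measurable D ->
  (forall t, D (Z t) -> 0 < sg * (W t - X t)) -> P (Z @^-1` D) = 0.
Proof.
move=> mD WX; have [_ iW XW_D] := XW.
have mZD : measurable (Z @^-1` D) by rewrite -[_ @^-1` _]setTI; exact: mZ.
pose W1 t := W t * \1_(Z @^-1` D) t; pose X1 t := X t * \1_(Z @^-1` D) t.
have W1_L1 : W1 \in Lfun P 1 by apply/Lfun1_integrable; exact: integrable_mul_indic.
have X1_L1 : X1 \in Lfun P 1 by apply/Lfun1_integrable; exact: integrable_mul_indic.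
have E : (fun t => sg * (W t - X t) * \1_(Z @^-1` D) t) = sg \o* (W1 \- X1).
  by apply/funext => t; rewrite /W1 /X1 /=; ring.
apply: (measure0_of_integral0 (F := fun t => sg * (W t - X t))) WX => //.
  by rewrite E; apply/Lfun1_integrable/Lfun_scale; rewrite ?rpredB.
have -> : (\int[P]_t (sg * (W t - X t) * \1_(Z @^-1` D) t)%:E
    = 'E_P[(sg \o* (W1 \- X1))%R])%E by rewrite unlock -E.
rewrite expectationZl ?rpredB// expectationB// /W1 /X1 -(XW_D _ mD) subee ?mule0//.
exact: expectation_fin_num.
Qed.

Lemma is_cond_exp_ae_in01 : (forall t, 0 <= X t <= 1) ->
  {ae P, forall t, 0 <= W t <= 1}.
Proof.
move=> X01; have [[g [mg Wg]] _ _] := XW.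
have WE t : W t = g (Z t) by rewrite Wg.
pose D1 := g @^-1` `]1, +oo[%classic; pose D0 := g @^-1` `]-oo, 0[%classic.
have mD1 : measurable D1 by rewrite -[D1]setTI; apply: mg => //; exact: measurable_itv.
have mD0 : measurable D0 by rewrite -[D0]setTI; apply: mg => //; exact: measurable_itv.
have mZpre A : measurable A -> measurable (Z @^-1` A).
  by move=> mA; rewrite -[_ @^-1` _]setTI; exact: mZ.
have N1 : P (Z @^-1` D1) = 0.
  apply: (is_cond_exp_null (sg := 1)) mD1 _ => t.
  rewrite /D1 /= in_itv /= andbT -WE mul1r => W_gt1.
  by have /andP[_ X_le1] := X01 t; rewrite subr_gt0 (le_lt_trans X_le1 W_gt1).
have N0 : P (Z @^-1` D0) = 0.
  apply: (is_cond_exp_null (sg := -1)) mD0 _ => t.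
  rewrite /D0 /= in_itv /= -WE mulN1r => W_lt0.
  by have /andP[X_ge0 _] := X01 t; rewrite oppr_gt0 subr_lt0 (lt_le_trans W_lt0 X_ge0).
exists (Z @^-1` D1 `|` Z @^-1` D0); split.
- by apply: measurableU; apply: mZpre.
- by rewrite measureU0//; apply: mZpre.
move=> t /= W_out; apply: contrapT => /not_orP[/negP W_le1 /negP W_ge0].
apply: W_out; move: W_le1 W_ge0.
by rewrite /D1 /D0 /= !in_itv /= andbT -!WE -!leNgt => -> ->.
Qed.

End is_cond_exp_in01.

Unset Implicit Arguments.

Theorem theorem2 (d : measure_display) (T : measurableType d) (R : realType)
  (P : probability T R)
  (dX : measure_display) (TX : measurableType dX)
  (X : T -> TX) (Y : T -> R) (f : TX -> R) (Q C : T -> R)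
  (J : nat) (B : 'I_J -> set R) :
  measurable_fun [set: T] X ->
  measurable_fun [set: T] Y ->
  (forall t, Y t = 0 \/ Y t = 1) ->
  (* Q = P(Y = 1 | X), a [0,1]-valued version *)
  is_cond_exp P X (fun t => \1_[set u | Y u = 1] t) Q ->
  (forall t, 0 <= Q t <= 1) ->
  (* S = f(X) is a confidence score in [0,1] *)
  measurable_fun [set: TX] f ->
  (forall x, 0 <= f x <= 1) ->
  (* C = E[Q | S] *)
  is_cond_exp P (f \o X) Q C ->
  interval_partition01 B ->
  let S := f \o X in
  let SB := binned_score P B S in
  let CB := condE_given P SB C in
  let CL := (- 'E_P[condVar_given P SB (fun t => S t - C t)%R])%E in
  let GL := ('E_P[condVar_given P SB C])%E in
  [/\ (CL + GL = 'E_P[(fun t => 2 * condCov_given P SB S C t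
                               - condVar_given P SB S t)%R])%E,
      (- 'E_P[(fun t => Num.sqrt (condVar_given P SB S t)
               * (2 * Num.sqrt (condVar_given P SB C t)
                  + Num.sqrt (condVar_given P SB S t)))%R] <= CL + GL)%E,
      (CL + GL <= 'E_P[(fun t => Num.sqrt (condVar_given P SB S t)
               * (2 * Num.sqrt (condVar_given P SB C t)
                  - Num.sqrt (condVar_given P SB S t)))%R])%E &
      (equal_width_bins B ->
       (- (J%:R^-1)%:E * 'E_P[(fun t => Num.sqrt (CB t * (1 - CB t)))%R]
          - ((4 * J%:R ^+ 2)^-1)%:E <= CL + GL)%E /\
       (CL + GL <= (J%:R^-1)%:E * 'E_P[(fun t => Num.sqrt (CB t * (1 - CB t)))%R])%E)].
Proof.
move=> mX _ _ [[gQ [mgQ ->]] _ _] Q01 mf f01 QC hB.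
have mS : measurable_fun setT (f \o X) := measurableT_comp mf mX.
have bQ : bounded_mfun (gQ \o X) := bounded_mfun01 (measurableT_comp mgQ mX) Q01.
have [[gC [mgC CE]] _ _] := QC.
have mC : measurable_fun setT C by rewrite CE; exact: measurableT_comp.
have QC_ae := is_cond_exp_ae_in01 mS (bounded_mfun_integrable P bQ) QC Q01.
exact: (induced_loss_bounds_ae mS (fun t => f01 (X t)) hB mC QC_ae).
Qed.
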